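(* Let $G$ be a $(P_6,C_5)$-free graph containing a 7-antihole with vertex set $C=\{v_0,\dots,v_6\}$, where $v_iv_j\in E(G)$ iff $2\le |i-j|\le 5$ (indices mod 7). Let $X$ be the set of vertices of $V(G)\setminus C$ with a neighbor in $C$, and $Y=V(G)\setminus(C\cup X)$. A vertex $x\in X$ is a leaf at $v_i$ if $N(x)\cap C=\{v_i\}$; $x$ is big if it is complete to some triangle (three pairwise adjacent vertices) of $C$; $x$ is small if it is neither a leaf nor big. Let $Z_\ell$ be the set of leaves at $v_\ell$ and $Z=\bigcup_\ell Z_\ell$. Then: (1) If $x\in X$ is adjacent to both $v_i$ and $v_{i+1}$ for some $i$, then $x$ is adjacent to at least one of $v_{i-1},v_{i+2}$. (2) If $x\in X$ is small or a leaf, then either (2.1) there is $i$ such that $x$ is nonadjacent to both $v_{i-1},v_{i+2}$ and adjacent to exactly one of $v_i,v_{i+1}$, or (2.2) $N(x)\cap C$ consists of exactly 3 or exactly 4 cyclically consecutive vertices of $C$. (3) Let $\ell\in\{0,\dots,6\}$ and let $x\in X\setminus Z_\ell$ have a neighbor $u\in Y\cup Z_\ell$. Then (3.1) $x$ is not a leaf; (3.2) if $x$ is adjacent to $v_i$ and nonadjacent to each of $v_{i-1},v_{i+1},v_{i+2}$, then $u\in Z_\ell$ and $\ell\in\{i,i+1,i+2\}$; (3.3) if $v\in Y\cup Z_\ell$ is adjacent to $u$ and $x$ is nonadjacent to $v$, then $N(x)\cap C$ contains at least 5 cyclically consecutive vertices of $C$. (4) Let $x\in X$ be a small vertex with a neighbor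 in $Y\cup Z$. Then (4.1) $N(x)\cap C$ consists of exactly 3 or exactly 4 cyclically consecutive vertices of $C$; and (4.2) if $v_j\notin N(x)$, then (a) if $x$ has a neighbor in $Z_j$, then $x$ is complete to $\{v_{j+2},v_{j+3},v_{j-3},v_{j-2}\}$, and (b) if $Z_j\neq\emptyset$, then $x$ is nonadjacent to each of $v_{j-1},v_j,v_{j+1}$. (5) If $x_1,x_2\in X$ are nonadjacent small vertices each having a neighbor in $Y\cup Z$, then $N(x_1)\cap C\subseteq N(x_2)\cap C$ or $N(x_2)\cap C\subseteq N(x_1)\cap C$.
   Context: Graphs are finite and simple; $N(v)$ denotes the set of neighbors of $v$. A graph is $(P_6,C_5)$-free if it has no induced $P_6$ (6-vertex path) and no induced 5-cycle. A 7-antihole is an induced subgraph isomorphic to the complement of the 7-cycle. Vertices $v_i,v_{i+1},\dots,v_{i+k}$ (indices mod 7) are called cyclically consecutive. A vertex is complete (anticomplete) to a set if it is adjacent to all (none) of its vertices. *)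

From mathcomp Require Import all_boot.
Set Implicit Arguments. Unset Strict Implicit. Unset Printing Implicit Defensive.

(* A finite simple graph: vertex type T (finType), adjacency e : rel T,
   assumed symmetric and irreflexive (as hypotheses of the theorem). *)

Section Graph.
Variables (T : finType) (e : rel T).

Definition has_induced_P6 : Prop :=
  exists f : 'I_6 -> T, injective f /\
    forall i j : 'I_6, e (f i) (f j) = ((i.+1 == j :> nat) || (j.+1 == i :> nat)).

Definition has_induced_C5 : Prop :=
  exists f : 'I_5 -> T, injective f /\
    forall i j : 'I_5, e (f i) (f j) = (((i + 1) %% 5 == j) || ((j + 1) %% 5 == i)).

Definition P6C5_free : Prop := ~ has_induced_P6 /\ ~ has_induced_C5.

Definition absdiff (i j : nat) : nat := if i <= j then j - i else i - j.

Definition is_7antihole (v : 'I_7 -> T) : Prop :=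
  injective v /\
  forall i j : 'I_7, e (v i) (v j) = (2 <= absdiff i j <= 5).

Variable v : 'I_7 -> T.

Definition idx (k : nat) : 'I_7 := inord (k %% 7).
Definition vv (k : nat) : T := v (idx k).

Definition Cset : {set T} := [set v i | i : 'I_7].
Definition Xset : {set T} :=
  [set x | (x \notin Cset) && [exists i : 'I_7, e x (v i)]].
Definition Yset : {set T} := ~: (Cset :|: Xset).

Definition NC (x : T) : {set 'I_7} := [set i : 'I_7 | e x (v i)].

Definition leaf_at (i : 'I_7) (x : T) : Prop := x \in Xset /\ NC x = [set i].
Definition is_leaf (x : T) : Prop := exists i, leaf_at i x.

Definition is_big (x : T) : Prop :=
  x \in Xset /\
  exists i j k : 'I_7, [/\ i != j, j != k, i != k,
     [&& e (v i) (v j), e (v j) (v k) & e (v i) (v k)] &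
     [&& e x (v i), e x (v j) & e x (v k)]].

Definition is_small (x : T) : Prop := [/\ x \in Xset, ~ is_leaf x & ~ is_big x].

Definition Zset (l : 'I_7) : {set T} := [set x in Xset | NC x == [set l]].
Definition Zall : {set T} := \bigcup_(l : 'I_7) Zset l.

Definition consec (k : nat) (S : {set 'I_7}) : Prop :=
  exists i : 'I_7, S = [set idx (i + t) | t : 'I_k].

Definition contains5consec (x : T) : Prop :=
  exists i : 'I_7, forall t, t < 5 -> e x (vv (i + t)).

End Graph.

From mathcomp Require Import all_boot zify.
Set Implicit Arguments. Unset Strict Implicit. Unset Printing Implicit Defensive.

(* Each claim concerns the antihole C together with at most four vertices
   outside it.  Such a configuration is determined by finitely many bits: the
   neighbourhood in C of each further vertex and the adjacencies among the
   further vertices.  For every assignment of these bits either the claim holds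
   or the configuration contains an induced P6 or C5, which cannot occur in G;
   the finitely many cases are decided by computation, each obstruction being
   looked up in a list of candidate vertex sequences.  For (4.2) and (5) the
   neighbours in Y ∪ Z of a small vertex are first restricted to the rows
   allowed by the first half of (4), which keeps the case analysis small. *)

(* vm_compute is call-by-value, so [all] and [has] evaluate the whole
   sequence; these variants stop at the first decisive element. *)
Fixpoint lazy_all (A : Type) (a : pred A) (s : seq A) : bool :=
  if s is x :: s' then (if a x then lazy_all a s' else false) else true.

Fixpoint lazy_has (A : Type) (a : pred A) (s : seq A) : bool :=
  if s is x :: s' then (if a x then true else lazy_has a s') else false.

Lemma lazy_allE (A : Type) (a : pred A) s : lazy_all a s = all a s.
Proof. by elim: s => //= x s ->; case: (a x). Qed.

Lemma lazy_hasE (A : Type) (a : pred A) s : lazy_has a s = has a s.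
Proof. by elim: s => //= x s ->; case: (a x). Qed.

Definition pattern_P6 (i j : nat) : bool := (i.+1 == j) || (j.+1 == i).
Definition pattern_C5 (i j : nat) : bool := ((i + 1) %% 5 == j) || ((j + 1) %% 5 == i).

Definition induces (n : nat) (M pat : nat -> nat -> bool) (p : seq nat) : bool :=
  if lazy_all (fun i => lazy_all (fun j => M (nth 0 p i) (nth 0 p j) == pat i j) (iota 0 i))
              (iota 0 (size p))
  then uniq p && all (gtn n) p else false.

Definition obstruction (n : nat) (M : nat -> nat -> bool) (p : seq nat) : bool :=
  if size p == 6 then induces n M pattern_P6 p
  else (size p == 5) && induces n M pattern_C5 p.

Lemma pattern_P6_sym i j : pattern_P6 i j = pattern_P6 j i.
Proof. exact: orbC. Qed.

Lemma pattern_C5_sym i j : pattern_C5 i j = pattern_C5 j i.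
Proof. exact: orbC. Qed.

Lemma pattern_P6_irr i : pattern_P6 i i = false.
Proof. by rewrite /pattern_P6 orbb; lia. Qed.

Lemma pattern_C5_irr i : pattern_C5 i i = false.
Proof. by rewrite /pattern_C5 orbb; apply/eqP; lia. Qed.

Section InducedCopies.
Variables (T : finType) (e : rel T) (n : nat) (M : nat -> nat -> bool) (f : nat -> T).
Hypotheses (e_sym : symmetric e) (e_irr : irreflexive e).
Hypotheses (f_inj : {in gtn n &, injective f})
           (f_adj : {in gtn n &, forall a b, e (f a) (f b) = M a b}).

Lemma induces_copy (k : nat) (pat : nat -> nat -> bool) (p : seq nat) :
  (forall i j, pat i j = pat j i) -> (forall i, pat i i = false) ->
  size p = k -> induces n M pat p ->
  exists g : 'I_k -> T, injective g /\ forall i j : 'I_k, e (g i) (g j) = pat i j.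
Proof.
move=> pat_sym pat_irr; rewrite /induces lazy_allE.
case: allP => // p_pat sz_p /andP [p_uniq /allP p_lt].
have lt_p i : i < k -> nth 0 p i < n by move=> lt_ik; apply/p_lt/mem_nth; rewrite sz_p.
pose g (i : 'I_k) := f (nth 0 p i); exists g; split.
  move=> i j /f_inj; rewrite !inE => /(_ (lt_p _ (ltn_ord i)) (lt_p _ (ltn_ord j))) /eqP.
  by rewrite nth_uniq ?sz_p // => /eqP /val_inj.
have g_lt (i j : 'I_k) : j < i -> e (g i) (g j) = pat i j.
  move=> lt_ji; rewrite /g f_adj ?inE ?lt_p //.
  have := p_pat i; rewrite mem_iota sz_p ltn_ord lazy_allE => /(_ isT) /allP /(_ j).
  by rewrite mem_iota lt_ji => /(_ isT) /eqP.
move=> i j; case: (ltngtP i j) => [lt_ij|lt_ji|/val_inj ->]; last by rewrite e_irr pat_irr.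
  by rewrite e_sym pat_sym g_lt.
exact: g_lt.
Qed.

Lemma obstruction_absent (p : seq nat) : P6C5_free e -> obstruction n M p = false.
Proof.
case=> noP6 noC5; rewrite /obstruction; case: eqP => [sz6|_].
  apply/negbTE/negP => /(induces_copy pattern_P6_sym pattern_P6_irr sz6) [g g_ind].
  by apply: noP6; exists g.
case: eqP => [sz5|//] /=.
apply/negbTE/negP => /(induces_copy pattern_C5_sym pattern_C5_irr sz5) [g g_ind].
by apply: noC5; exists g.
Qed.

End InducedCopies.

Definition antihole_adj (a b : nat) : bool := 2 <= absdiff a b <= 5.

(* Vertices 0-6 of a configuration are v_0, ..., v_6, followed by further
   vertices 7, 8, ...; the row of vertex 7 + j lists its adjacency to the
   vertices 7, ..., 6 + j and then to v_0, ..., v_6. *)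
Definition config (rs : seq (seq bool)) (a b : nat) : bool :=
  let i := minn a b in let j := maxn a b in
  if j < 7 then antihole_adj i j
  else (i != j) && nth false (nth [::] rs (j - 7)) (if i < 7 then j - 7 + i else i - 7).

Lemma config_sym rs a b : config rs a b = config rs b a.
Proof. by rewrite /config minnC maxnC. Qed.

(* The adjacency matrix is tabulated once, as every candidate queries it. *)
Definition obstructed (cs : seq (seq nat)) (rs : seq (seq bool)) : bool :=
  let n := 7 + size rs in
  let A := [seq [seq config rs a b | b <- iota 0 n] | a <- iota 0 n] in
  lazy_has (obstruction n (fun a b => nth false (nth [::] A a) b)) cs.

(* A vertex x outside C is described by its row, the bit vector of N(x) ∩ C,
   which [bit] reads with indices mod 7. *)
Definition bit (r : seq bool) (k : nat) : bool := nth false r (k %% 7).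

Fixpoint bool_seqs (k : nat) : seq (seq bool) :=
  if k is k'.+1 then [seq b :: s | b <- [:: true; false], s <- bool_seqs k'] else [:: [::]].

Lemma mem_bool_seqs k s : (s \in bool_seqs k) = (size s == k).
Proof.
have cons_inj (c : bool) : injective (cons c) by move=> ? ? [].
elim: k s => [|k IH] [|b s] //=; rewrite mem_cat cats0.
  by apply/negbTE; rewrite negb_or; apply/andP; split; apply/mapP => -[].
rewrite eqSS -IH; case: b; rewrite (mem_map (cons_inj _));
  by case: mapP => [[? _ //]|]; rewrite ?orbF.
Qed.

Definition rows7 : seq (seq bool) := bool_seqs 7.
Definition zeros : seq bool := nseq 7 false.
Definition unit_row (l : nat) : seq bool := [seq k == l | k <- iota 0 7].
Definition unit_rows : seq (seq bool) := map unit_row (iota 0 7).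
Definition YZ_rows : seq (seq bool) := zeros :: unit_rows.
Definition window (i k : nat) : seq bool := [seq (m + 7 - i) %% 7 < k | m <- iota 0 7].

Definition nonzero_row (r : seq bool) : bool := has (bit r) (iota 0 7).
Definition leaf_row (r : seq bool) : bool := r \in unit_rows.
Definition big_row (r : seq bool) : bool :=
  has (fun a => has (fun b => has (fun c =>
    [&& antihole_adj a b, antihole_adj b c, antihole_adj a c, bit r a, bit r b & bit r c])
  (iota 0 7)) (iota 0 7)) (iota 0 7).
Definition small_row (r : seq bool) : bool := [&& nonzero_row r, ~~ leaf_row r & ~~ big_row r].
Definition consec_row (k : nat) (r : seq bool) : bool := r \in [seq window i k | i <- iota 0 7].
Definition consec34_row (r : seq bool) : bool := consec_row 3 r || consec_row 4 r.
Definition five_consec_row (r : seq bool) : bool :=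
  has (fun i => all (fun t => bit r (i + t)) (iota 0 5)) (iota 0 7).
Definition subrow (r1 r2 : seq bool) : bool := all (fun k => bit r1 k ==> bit r2 k) (iota 0 7).

Definition small_rows : seq (seq bool) := [seq r <- rows7 | small_row r].
Definition small_consec_rows : seq (seq bool) := [seq r <- small_rows | consec34_row r].

Definition claim1 (r : seq bool) : bool :=
  all (fun i => bit r i ==> bit r (i + 1) ==> bit r (i + 6) || bit r (i + 2)) (iota 0 7).
Definition claim2 (r : seq bool) : bool :=
  has (fun i => [&& ~~ bit r (i + 6), ~~ bit r (i + 2) & bit r i != bit r (i + 1)]) (iota 0 7)
  || consec34_row r.
Definition claim3 (l : nat) (r ur : seq bool) : bool :=
  ~~ leaf_row r &&
  all (fun i => [&& bit r i, ~~ bit r (i + 6), ~~ bit r (i + 1) & ~~ bit r (i + 2)] ==>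
        (ur != zeros) && [|| l == i %% 7, l == (i + 1) %% 7 | l == (i + 2) %% 7])
      (iota 0 7).
Definition claim4 (r ur : seq bool) : bool :=
  consec34_row r &&
  all (fun j => ~~ bit r j && (ur == unit_row j) ==>
        [&& bit r (j + 2), bit r (j + 3), bit r (j + 4), bit r (j + 5),
            ~~ bit r (j + 6) & ~~ bit r (j + 1)])
      (iota 0 7).

Definition admissible (r : seq bool) : seq (seq bool) := [seq u <- YZ_rows | claim4 r u].

(* Each witness lists the vertices, numbered as in [config], of a candidate
   induced P6 (six entries) or C5 (five entries). *)
Definition witnesses1 : seq (seq nat) := [::
  [:: 6; 4; 7; 5; 3]; [:: 3; 7; 4; 2; 5]; [:: 7; 3; 1; 4; 2]; [:: 4; 6; 7; 5; 0];
  [:: 0; 2; 6; 1; 7]; [:: 7; 6; 1; 5; 0]; [:: 3; 0; 2; 7; 1]].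

Definition witnesses2 : seq (seq nat) := [::
  [:: 7; 4; 2; 5; 3]; [:: 6; 4; 7; 5; 3]; [:: 2; 4; 1; 3; 7]; [:: 3; 0; 2; 7; 1];
  [:: 0; 2; 6; 1; 7]; [:: 7; 6; 1; 5; 0]; [:: 4; 6; 7; 5; 0]].

Definition witnesses3 : seq (seq nat) := [::
  [:: 9; 8; 7; 3; 6; 4]; [:: 9; 8; 7; 2; 6; 3]; [:: 5; 3; 6; 7; 8; 9];
  [:: 2; 5; 3; 7; 8; 9]; [:: 9; 8; 7; 5; 2; 6]; [:: 4; 6; 7; 5; 0];
  [:: 1; 4; 0; 7; 8; 9]; [:: 9; 8; 7; 4; 1; 5]; [:: 0; 5; 1; 7; 8; 9];
  [:: 3; 0; 4; 7; 8; 9]; [:: 8; 7; 6; 1; 5; 0]; [:: 0; 2; 6; 1; 7];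
  [:: 8; 7; 5; 0; 4; 6]; [:: 1; 6; 2; 0; 7; 8]; [:: 2; 0; 3; 1; 7; 8];
  [:: 1; 6; 2; 7; 8; 9]; [:: 9; 8; 7; 3; 0; 2]; [:: 3; 1; 4; 2; 7; 8];
  [:: 5; 3; 6; 4; 7; 8]; [:: 3; 1; 4; 7; 8; 9]; [:: 4; 2; 5; 3; 7; 8];
  [:: 9; 8; 7; 1; 4; 2]; [:: 2; 4; 1; 3; 7]; [:: 9; 8; 7; 5; 2; 4];
  [:: 6; 4; 0; 7; 8; 9]; [:: 3; 0; 2; 7; 1]; [:: 9; 8; 7; 6; 2; 0]; [:: 7; 6; 1; 5; 0];
  [:: 5; 0; 4; 6; 8; 9]; [:: 3; 1; 4; 2; 8; 9]; [:: 2; 7; 8; 1; 6];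
  [:: 9; 8; 4; 2; 5; 3]; [:: 0; 5; 8; 7; 4]; [:: 2; 6; 7; 8; 0]; [:: 8; 9; 2; 0; 3; 1];
  [:: 2; 5; 3; 8; 7]; [:: 5; 0; 4; 6; 9; 8]; [:: 0; 2; 6; 1; 9; 8];
  [:: 8; 9; 4; 2; 5; 3]; [:: 8; 1; 3; 0; 7]; [:: 7; 4; 2; 5; 3]; [:: 3; 6; 8; 7; 0];
  [:: 7; 8; 0; 5; 1]; [:: 5; 0; 4; 6; 7; 8]; [:: 4; 2; 5; 3; 9; 8]; [:: 3; 1; 4; 7; 8];
  [:: 3; 7; 8; 4; 6]; [:: 7; 8; 5; 3; 6]; [:: 9; 8; 7; 4; 0; 5]; [:: 8; 7; 1; 4; 2];
  [:: 6; 1; 5; 7; 8]; [:: 6; 2; 8; 7; 3]; [:: 7; 8; 4; 2; 5]; [:: 6; 4; 0; 5; 9; 8];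
  [:: 7; 8; 9; 0; 3]; [:: 6; 4; 7; 5; 3]; [:: 9; 8; 7; 4; 2; 5]; [:: 1; 3; 0; 7; 8; 9];
  [:: 8; 7; 2; 0; 3; 1]; [:: 4; 0; 3; 7; 8; 9]; [:: 8; 7; 5; 3; 6; 4];
  [:: 9; 8; 7; 5; 1; 6]; [:: 7; 3; 0; 2; 8]; [:: 0; 2; 6; 1; 7; 8];
  [:: 8; 7; 3; 1; 4; 2]; [:: 7; 8; 6; 4; 0]; [:: 9; 8; 7; 2; 5; 3];
  [:: 3; 1; 4; 2; 8; 7]; [:: 0; 5; 1; 6; 8; 7]].

Definition witnesses4a : seq (seq nat) := [::
  [:: 7; 4; 2; 5; 3]; [:: 6; 4; 7; 5; 3]; [:: 2; 4; 1; 3; 7]; [:: 3; 0; 2; 7; 1];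
  [:: 0; 2; 6; 1; 7]; [:: 7; 6; 1; 5; 0]; [:: 4; 6; 7; 5; 0]; [:: 3; 1; 4; 2; 7; 8];
  [:: 8; 7; 3; 1; 4; 2]; [:: 5; 3; 6; 4; 7; 8]; [:: 0; 2; 6; 1; 7; 8];
  [:: 8; 7; 6; 4; 0; 5]; [:: 1; 6; 2; 0; 7; 8]; [:: 8; 7; 5; 3; 6; 4];
  [:: 3; 5; 2; 4; 7; 8]; [:: 1; 3; 0; 2; 7; 8]; [:: 2; 5; 3; 8; 7]; [:: 7; 8; 5; 3; 6];
  [:: 8; 7; 3; 5; 2; 4]; [:: 6; 3; 7; 8; 2]; [:: 8; 7; 6; 1; 5; 0]; [:: 3; 7; 8; 4; 6];
  [:: 7; 8; 6; 4; 0]; [:: 8; 7; 0; 3; 1]; [:: 7; 8; 0; 5; 1]; [:: 2; 0; 3; 1; 7; 8];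
  [:: 8; 7; 5; 0; 4; 6]; [:: 5; 3; 6; 4; 8; 7]; [:: 8; 7; 1; 4; 2]; [:: 7; 8; 4; 2; 5];
  [:: 3; 1; 4; 7; 8]; [:: 0; 5; 8; 7; 4]; [:: 2; 7; 8; 1; 6]; [:: 6; 1; 5; 7; 8];
  [:: 2; 6; 7; 8; 0]; [:: 4; 6; 3; 5; 8; 7]; [:: 4; 2; 5; 3; 8; 7];
  [:: 3; 5; 2; 4; 8; 7]; [:: 6; 1; 5; 0; 7; 8]; [:: 3; 1; 4; 2; 8; 7];
  [:: 7; 8; 3; 1; 4; 2]; [:: 7; 8; 5; 0; 4; 6]; [:: 5; 0; 4; 6; 8; 7];
  [:: 6; 1; 5; 0; 8; 7]; [:: 0; 5; 1; 6; 8; 7]; [:: 7; 3; 0; 2; 8];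
  [:: 1; 6; 2; 0; 8; 7]; [:: 0; 2; 6; 1; 8; 7]; [:: 7; 8; 1; 3; 0; 2];
  [:: 7; 8; 2; 0; 3; 1]].

Definition witnesses4b : seq (seq nat) := [::
  [:: 3; 0; 2; 7; 1]; [:: 7; 4; 2; 5; 3]; [:: 2; 4; 1; 3; 7]; [:: 6; 4; 7; 5; 3];
  [:: 5; 0; 4; 6; 7]; [:: 7; 6; 1; 5; 0]; [:: 1; 6; 2; 0; 7]; [:: 8; 7; 3; 5; 2; 4];
  [:: 8; 7; 4; 6; 3; 5]; [:: 8; 7; 5; 3; 6; 4]; [:: 8; 7; 6; 1; 5; 0];
  [:: 2; 0; 3; 1; 7; 8]; [:: 8; 7; 2; 4; 1; 3]; [:: 8; 7; 0; 2; 6; 1];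
  [:: 8; 7; 5; 0; 4; 6]; [:: 0; 2; 6; 1; 7; 8]; [:: 5; 0; 4; 6; 7; 8];
  [:: 8; 7; 3; 1; 4; 2]; [:: 3; 5; 2; 4; 7; 8]; [:: 6; 1; 5; 0; 7; 8];
  [:: 8; 7; 2; 0; 3; 1]; [:: 7; 8; 9; 0; 3]; [:: 9; 8; 7; 4; 1]; [:: 6; 2; 9; 8; 7];
  [:: 3; 9; 8; 7; 0]; [:: 8; 9; 4; 1; 7]; [:: 9; 5; 2; 7; 8]; [:: 3; 6; 9; 8; 7];
  [:: 8; 7; 1; 5; 0; 9]; [:: 9; 0; 2; 6; 7; 8]; [:: 9; 1; 3; 0; 7; 8];
  [:: 8; 7; 2; 6; 1; 9]; [:: 8; 7; 1; 4; 2; 9]; [:: 8; 7; 3; 0; 2; 9];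
  [:: 8; 7; 2; 5; 3; 9]; [:: 9; 3; 1; 4; 7; 8]; [:: 9; 4; 6; 3; 7; 8];
  [:: 9; 4; 2; 5; 7; 8]; [:: 8; 7; 6; 3; 5; 9]; [:: 8; 7; 4; 0; 5; 9];
  [:: 9; 6; 4; 0; 7; 8]; [:: 9; 6; 1; 5; 7; 8]; [:: 7; 8; 0; 5; 1]; [:: 0; 5; 8; 7; 4];
  [:: 4; 8; 7; 3; 6]; [:: 2; 4; 1; 7; 8]; [:: 8; 3; 1; 4; 7]; [:: 8; 7; 0; 3; 1];
  [:: 7; 8; 6; 4; 0]; [:: 4; 2; 5; 3; 8; 9]; [:: 8; 9; 1; 3; 0; 2];
  [:: 8; 9; 2; 0; 3; 1]; [:: 8; 9; 3; 1; 4; 2]; [:: 8; 9; 4; 2; 5; 3];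
  [:: 8; 9; 5; 3; 6; 4]; [:: 2; 6; 7; 8; 0]; [:: 7; 3; 0; 2; 8]; [:: 7; 8; 9; 0; 3; 1];
  [:: 7; 8; 4; 2; 5]; [:: 2; 7; 8; 1; 6]; [:: 6; 1; 5; 7; 8]; [:: 7; 8; 5; 3; 6];
  [:: 2; 5; 3; 8; 7]; [:: 7; 8; 9; 6; 3; 5]; [:: 8; 1; 6; 2; 0; 9];
  [:: 7; 8; 5; 0; 4; 6]; [:: 5; 0; 4; 6; 8; 7]; [:: 8; 6; 1; 5; 0; 9];
  [:: 7; 8; 1; 3; 0; 2]; [:: 7; 8; 2; 0; 3; 1]; [:: 9; 1; 6; 2; 0; 8];
  [:: 3; 1; 4; 2; 8; 7]; [:: 7; 8; 3; 1; 4; 2]; [:: 8; 2; 0; 3; 1; 9];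
  [:: 6; 1; 5; 0; 8; 7]; [:: 0; 5; 1; 6; 8; 7]; [:: 9; 2; 0; 3; 1; 8];
  [:: 4; 2; 5; 3; 8; 7]; [:: 3; 5; 2; 4; 8; 7]; [:: 9; 2; 4; 1; 3; 8];
  [:: 1; 6; 2; 0; 8; 7]; [:: 0; 2; 6; 1; 8; 7]; [:: 8; 2; 4; 1; 3; 9];
  [:: 5; 3; 6; 4; 8; 7]; [:: 4; 6; 3; 5; 8; 7]; [:: 8; 4; 2; 5; 3; 9];
  [:: 8; 3; 5; 2; 4; 9]; [:: 8; 5; 3; 6; 4; 9]; [:: 8; 6; 4; 0; 5; 9];
  [:: 8; 4; 6; 3; 5; 9]; [:: 8; 0; 5; 1; 6; 9]; [:: 9; 6; 4; 0; 5; 8];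
  [:: 5; 7; 8; 9; 1]; [:: 9; 2; 4; 7; 8]; [:: 8; 7; 5; 3; 9]; [:: 8; 5; 1; 4; 9];
  [:: 0; 5; 9; 8; 7]].

Definition witnesses5 : seq (seq nat) := [::
  [:: 9; 7; 2; 8; 10]; [:: 6; 7; 9; 10; 8]; [:: 6; 3; 7; 9; 8]; [:: 3; 6; 7; 9; 8];
  [:: 7; 9; 10; 8; 4]; [:: 9; 7; 4; 1; 8]; [:: 1; 4; 8; 9; 7]; [:: 10; 8; 0; 7; 9];
  [:: 9; 7; 2; 5; 8]; [:: 8; 2; 5; 7; 9]; [:: 10; 8; 6; 3; 7; 9]; [:: 9; 7; 1; 5; 8; 10];
  [:: 10; 8; 2; 6; 7; 9]; [:: 9; 7; 4; 1; 8; 10]; [:: 9; 7; 3; 8; 10];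
  [:: 9; 7; 0; 4; 8; 10]; [:: 8; 9; 7; 4; 0]; [:: 9; 7; 0; 4; 8]; [:: 7; 1; 8; 10; 9];
  [:: 8; 10; 9; 7; 5]; [:: 10; 8; 6; 2; 7; 9]; [:: 9; 7; 5; 2; 8; 10];
  [:: 10; 8; 3; 6; 7; 9]; [:: 9; 7; 3; 0; 8; 10]; [:: 2; 5; 3; 8; 7]; [:: 7; 8; 5; 3; 6];
  [:: 3; 7; 8; 4; 6]; [:: 7; 8; 6; 4; 0]; [:: 8; 7; 1; 4; 2]; [:: 7; 8; 4; 2; 5];
  [:: 7; 8; 0; 5; 1]; [:: 0; 5; 8; 7; 4]; [:: 2; 7; 8; 1; 6]; [:: 6; 1; 5; 7; 8];
  [:: 8; 0; 2; 6; 7]; [:: 8; 3; 1; 4; 7]; [:: 8; 1; 3; 0; 7]; [:: 3; 7; 8; 2; 0];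
  [:: 7; 9; 8; 1; 5]; [:: 9; 8; 6; 2; 7]; [:: 9; 7; 1; 5; 8]; [:: 9; 7; 0; 3; 8];
  [:: 9; 8; 2; 6; 7]; [:: 3; 7; 9; 8; 0]; [:: 10; 8; 5; 2; 7; 9]; [:: 10; 8; 4; 1; 7; 9];
  [:: 9; 7; 0; 3; 8; 10]; [:: 10; 8; 1; 5; 7; 9]; [:: 10; 8; 0; 4; 7; 9];
  [:: 4; 2; 5; 3; 8; 7]; [:: 3; 5; 2; 4; 8; 7]; [:: 6; 1; 5; 0; 8; 7];
  [:: 0; 5; 1; 6; 8; 7]; [:: 7; 8; 1; 3; 0; 2]; [:: 7; 8; 2; 0; 3; 1];
  [:: 3; 1; 4; 2; 8; 7]; [:: 7; 8; 3; 1; 4; 2]; [:: 7; 8; 5; 0; 4; 6];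
  [:: 5; 0; 4; 6; 8; 7]; [:: 1; 6; 2; 0; 8; 7]; [:: 0; 2; 6; 1; 8; 7];
  [:: 5; 3; 6; 4; 8; 7]; [:: 4; 6; 3; 5; 8; 7]; [:: 1; 7; 0; 8; 6]; [:: 3; 8; 4; 2; 7];
  [:: 7; 1; 3; 8; 2]; [:: 0; 5; 8; 6; 7]; [:: 2; 0; 7; 1; 8]; [:: 4; 8; 5; 7; 6];
  [:: 7; 0; 8; 1; 6]; [:: 7; 4; 8; 3; 5]; [:: 0; 2; 7; 1; 8]; [:: 3; 7; 4; 8; 5];
  [:: 1; 3; 7; 2; 8]; [:: 4; 6; 8; 5; 7]; [:: 2; 4; 7; 3; 8]; [:: 6; 7; 5; 0; 8];
  [:: 7; 0; 4; 6; 9]; [:: 9; 3; 5; 2; 8; 10]; [:: 9; 2; 4; 1; 8; 10]; [:: 4; 6; 3; 7; 9];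
  [:: 10; 8; 1; 5; 0; 9]; [:: 9; 1; 6; 2; 8; 10]; [:: 9; 7; 2; 5; 3];
  [:: 10; 8; 0; 4; 6; 9]; [:: 7; 6; 3; 5; 9]; [:: 10; 8; 0; 3; 1; 9]; [:: 2; 9; 7; 1; 4];
  [:: 9; 5; 3; 6; 8; 10]; [:: 9; 4; 2; 5; 7]; [:: 9; 0; 2; 6; 8; 10]; [:: 1; 3; 0; 7; 9];
  [:: 10; 8; 5; 2; 4; 9]; [:: 10; 8; 5; 1; 6; 9]; [:: 9; 3; 1; 4; 7]; [:: 0; 5; 1; 7; 9];
  [:: 10; 8; 3; 6; 4; 9]; [:: 9; 7; 4; 0; 5]; [:: 9; 2; 0; 3; 8; 10];
  [:: 10; 8; 4; 1; 3; 9]; [:: 6; 1; 9; 7; 2]; [:: 10; 8; 4; 0; 5; 9]; [:: 5; 7; 9; 6; 1];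
  [:: 2; 6; 7; 9; 0]; [:: 9; 2; 0; 3; 7]; [:: 4; 2; 5; 8; 10; 9]; [:: 5; 3; 7; 9; 10; 8];
  [:: 6; 1; 5; 8; 10; 9]; [:: 5; 0; 4; 8; 10; 9]; [:: 9; 10; 8; 4; 1; 3];
  [:: 9; 10; 8; 3; 6; 4]; [:: 9; 10; 8; 2; 5; 3]; [:: 9; 10; 8; 1; 4; 2];
  [:: 8; 10; 9; 7; 6; 1]; [:: 1; 3; 7; 9; 10; 8]; [:: 7; 9; 10; 8; 1; 6];
  [:: 9; 7; 0; 4; 6; 10]; [:: 9; 7; 3; 6; 4; 10]; [:: 9; 7; 3; 5; 8; 4];
  [:: 10; 3; 5; 2; 7; 9]; [:: 10; 5; 3; 6; 7; 9]; [:: 3; 8; 4; 2; 7; 9];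
  [:: 9; 7; 1; 4; 2; 10]; [:: 9; 7; 5; 2; 4; 10]; [:: 2; 8; 3; 1; 7; 9];
  [:: 10; 1; 3; 0; 7; 9]; [:: 9; 7; 0; 2; 8; 1]; [:: 9; 7; 4; 1; 3; 10];
  [:: 10; 0; 5; 1; 7; 9]; [:: 5; 8; 6; 4; 7; 9]; [:: 10; 5; 0; 4; 7; 9];
  [:: 9; 7; 5; 0; 8; 6]; [:: 9; 7; 2; 6; 1; 10]; [:: 9; 7; 5; 1; 6; 10];
  [:: 0; 8; 1; 6; 7; 9]; [:: 10; 0; 2; 6; 7; 9]; [:: 9; 7; 3; 0; 2; 10];
  [:: 0; 2; 6; 8; 10; 9]; [:: 9; 10; 8; 3; 0; 2]; [:: 8; 10; 9; 7; 5; 0];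
  [:: 10; 6; 1; 5; 0; 9]; [:: 9; 3; 1; 4; 2; 10]; [:: 9; 0; 2; 6; 1; 10];
  [:: 9; 3; 5; 2; 4; 10]; [:: 10; 3; 1; 4; 2; 9]; [:: 9; 6; 1; 5; 0; 10];
  [:: 10; 1; 3; 0; 2; 9]; [:: 10; 5; 0; 4; 6; 9]; [:: 10; 2; 0; 3; 1; 9];
  [:: 10; 6; 4; 0; 5; 9]; [:: 10; 0; 2; 6; 1; 9]; [:: 9; 5; 3; 6; 4; 10];
  [:: 10; 5; 3; 6; 4; 9]; [:: 9; 4; 2; 5; 3; 10]; [:: 6; 8; 5; 0; 7; 9];
  [:: 9; 7; 6; 4; 8; 5]; [:: 4; 8; 3; 5; 7; 9]; [:: 9; 7; 4; 2; 8; 3];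
  [:: 0; 8; 6; 1; 7; 9]; [:: 9; 7; 2; 0; 8; 1]; [:: 9; 7; 3; 1; 8; 2];
  [:: 3; 9; 8; 2; 5]; [:: 0; 9; 8; 1; 5]; [:: 4; 6; 9; 8; 0]; [:: 8; 1; 4; 2; 9];
  [:: 5; 2; 6; 8; 10; 9]; [:: 3; 6; 8; 9; 5]; [:: 9; 1; 3; 0; 8]; [:: 4; 9; 8; 5; 2];
  [:: 8; 9; 0; 2; 6]; [:: 3; 6; 4; 9; 8]; [:: 9; 10; 8; 0; 4; 1]; [:: 9; 1; 6; 2; 8];
  [:: 0; 4; 8; 9; 5]; [:: 0; 2; 9; 8; 3]; [:: 9; 3; 1; 4; 8]; [:: 5; 1; 6; 9; 8];
  [:: 4; 6; 3; 5; 10; 9]; [:: 10; 9; 0; 2; 6; 1]; [:: 9; 7; 0; 4; 10];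
  [:: 0; 3; 10; 9; 7]; [:: 10; 9; 3; 5; 2; 4]; [:: 10; 2; 4; 7; 9];
  [:: 7; 9; 5; 8; 6; 4]; [:: 6; 4; 8; 5; 9; 7]; [:: 7; 9; 4; 8; 5; 3];
  [:: 5; 3; 8; 4; 9; 7]; [:: 4; 2; 8; 3; 9; 7]; [:: 2; 4; 8; 3; 9; 7];
  [:: 7; 9; 2; 8; 1; 3]; [:: 1; 3; 8; 2; 9; 7]; [:: 7; 9; 6; 8; 0; 5];
  [:: 0; 5; 8; 6; 9; 7]; [:: 6; 1; 8; 0; 9; 7]; [:: 1; 6; 8; 0; 9; 7];
  [:: 2; 0; 8; 1; 9; 7]; [:: 7; 9; 1; 8; 2; 0]; [:: 5; 9; 10; 8; 6; 4]].

Lemma table1 : all (fun r => claim1 r || obstructed witnesses1 [:: r]) rows7.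
Proof. by vm_compute. Qed.

Lemma table2 : all (fun r => nonzero_row r && (~~ big_row r || leaf_row r) ==>
  claim2 r || obstructed witnesses2 [:: r]) rows7.
Proof. by vm_compute. Qed.

Lemma table3 : all (fun l => all (fun r => nonzero_row r && (r != unit_row l) ==>
  all (fun ur => (claim3 l r ur || obstructed witnesses3 [:: r; true :: ur]) &&
    all (fun wr => five_consec_row r ||
                   obstructed witnesses3 [:: r; true :: ur; false :: true :: wr])
      [:: zeros; unit_row l])
  [:: zeros; unit_row l]) rows7) (iota 0 7).
Proof. by vm_compute. Qed.

Lemma table4a : all (fun r => all (fun ur =>
  claim4 r ur || obstructed witnesses4a [:: r; true :: ur]) YZ_rows) small_rows.
Proof. by vm_compute. Qed.

Lemma table4b : all (fun j => all (fun r => ~~ bit r j ==>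
  (~~ bit r (j + 6) && ~~ bit r (j + 1)) ||
  all (fun ur => all (fun b => obstructed witnesses4b [:: r; true :: ur; false :: b :: unit_row j])
                   [:: true; false])
    (admissible r)) small_rows) (iota 0 7).
Proof. by vm_compute. Qed.

Lemma table5a : all (fun r1 => all (fun r2 => ~~ subrow r1 r2 && ~~ subrow r2 r1 ==>
  all (fun u => obstructed witnesses5 [:: r1; false :: r2; true :: true :: u]) (admissible r1))
  small_consec_rows) small_consec_rows.
Proof. by vm_compute. Qed.

Lemma table5b : all (fun r1 => all (fun r2 => ~~ subrow r1 r2 && ~~ subrow r2 r1 ==>
  all (fun u1 => obstructed witnesses5 [:: r1; false :: r2; true :: false :: u1] ||
    all (fun u2 => all (fun b =>
        obstructed witnesses5 [:: r1; false :: r2; true :: false :: u1; false :: true :: b :: u2])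
      [:: true; false]) (admissible r2))
  (admissible r1)) small_consec_rows) small_consec_rows.
Proof. by vm_compute. Qed.

Section Antihole.
Variables (T : finType) (e : rel T) (v : 'I_7 -> T).
Hypotheses (e_sym : symmetric e) (e_irr : irreflexive e) (Hanti : is_7antihole e v).
Hypothesis Hfree : P6C5_free e.

Local Notation X := (Xset e v).
Local Notation Y := (Yset e v).
Local Notation Z := (Zset e v).

Lemma vv_inord k : k < 7 -> vv v k = v (inord k).
Proof. by move=> lt_k7; rewrite /vv /idx modn_small. Qed.

Lemma vv_ord (i : 'I_7) : vv v i = v i.
Proof. by rewrite vv_inord // inord_val. Qed.

Lemma vv_mod k : vv v (k %% 7) = vv v k.
Proof. by rewrite /vv /idx modn_mod. Qed.

Lemma vv_in_C k : vv v k \in Cset v.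
Proof. exact: imset_f. Qed.

Lemma antihole_vv a b : a < 7 -> b < 7 -> e (vv v a) (vv v b) = antihole_adj a b.
Proof. by move=> lt_a lt_b; rewrite !vv_inord // Hanti.2 !inordK. Qed.

Definition rowof (x : T) : seq bool := [seq e x (vv v k) | k <- iota 0 7].

Lemma size_rowof x : size (rowof x) = 7.
Proof. by rewrite size_map size_iota. Qed.

Lemma rowof_rows7 x : rowof x \in rows7.
Proof. by rewrite mem_bool_seqs size_rowof. Qed.

Lemma bit_rowof x k : bit (rowof x) k = e x (vv v k).
Proof.
by rewrite /bit (nth_map 0) ?size_iota ?ltn_pmod // nth_iota ?ltn_pmod // vv_mod.
Qed.

Lemma rowof_eq x r : size r = 7 -> (forall i : 'I_7, e x (v i) = nth false r i) -> rowof x = r.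
Proof.
move=> sz_r x_r; apply: (@eq_from_nth _ false); rewrite ?size_rowof ?sz_r // => k lt_k.
by rewrite (nth_map 0) ?size_iota // nth_iota // vv_inord // x_r inordK.
Qed.

Definition config_vertex (vs : seq T) (a : nat) : T :=
  if a < 7 then vv v a else nth (vv v 0) vs (a - 7).

Definition attachments (vs : seq T) : seq (seq bool) :=
  [seq [seq e z (nth (vv v 0) vs j) | z <- take j vs] ++ rowof (nth (vv v 0) vs j)
  | j <- iota 0 (size vs)].

Lemma config_vertex_inj vs : uniq vs -> all (fun y => y \notin Cset v) vs ->
  {in gtn (7 + size vs) &, injective (config_vertex vs)}.
Proof.
move=> vs_uniq /allP vs_C a b; rewrite !inE /config_vertex => lt_a' lt_b'.
case: (ltnP a 7) => [lt_a|le_a]; case: (ltnP b 7) => [lt_b|le_b].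
- by rewrite !vv_inord // => /(proj1 Hanti) /(congr1 val) /=; rewrite !inordK.
- have lt_b7 : b - 7 < size vs by lia.
  by move=> eq_ab; have := vs_C _ (mem_nth (vv v 0) lt_b7); rewrite -eq_ab vv_in_C.
- have lt_a7 : a - 7 < size vs by lia.
  by move=> eq_ab; have := vs_C _ (mem_nth (vv v 0) lt_a7); rewrite eq_ab vv_in_C.
- by move/eqP; rewrite nth_uniq //; [move/eqP; lia|lia|lia].
Qed.

Lemma config_attachments vs : {in gtn (7 + size vs) &, forall a b,
  config (attachments vs) a b = e (config_vertex vs a) (config_vertex vs b)}.
Proof.
move=> a b; rewrite !inE.
wlog le_ab : a b / a <= b.
  move=> le_case lt_a lt_b; case: (leqP a b) => [le_ab|/ltnW le_ba]; first exact: le_case.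
  by rewrite config_sym e_sym le_case.
move=> lt_a lt_b; rewrite /config (minn_idPl le_ab) (maxn_idPr le_ab) /config_vertex /=.
case: (ltnP b 7) => [lt_b7|le_7b].
  by rewrite (leq_ltn_trans le_ab lt_b7) antihole_vv // (leq_ltn_trans le_ab lt_b7).
case: (eqVneq a b) => [eq_ab|ne_ab]; first by rewrite eq_ab ltnNge le_7b e_irr.
have lt_b' : b - 7 < size vs by lia.
rewrite (nth_map 0) ?size_iota // nth_iota // add0n.
have sz_take : size [seq e z (nth (vv v 0) vs (b - 7)) | z <- take (b - 7) vs] = b - 7.
  by rewrite size_map size_take lt_b'.
case: (ltnP a 7) => [lt_a7|le_7a].
  rewrite nth_cat sz_take ltnNge leq_addr /= addKn.
  by rewrite (nth_map 0) ?size_iota // nth_iota // e_sym.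
rewrite nth_cat sz_take (_ : a - 7 < b - 7); last by lia.
by rewrite (nth_map (vv v 0)) ?size_take ?lt_b' ?nth_take //; lia.
Qed.

Lemma attachments_unobstructed cs vs : uniq vs -> all (fun y => y \notin Cset v) vs ->
  obstructed cs (attachments vs) = false.
Proof.
move=> vs_uniq vs_C; rewrite /obstructed lazy_hasE size_map size_iota.
apply/negbTE/hasPn => p _; apply/negbT.
apply: (obstruction_absent e_sym e_irr (config_vertex_inj vs_uniq vs_C)) => // a b a_lt b_lt.
move: (a_lt) (b_lt); rewrite !inE => lt_a lt_b.
by rewrite !(nth_map 0) ?size_iota // !nth_iota // config_attachments.
Qed.

Lemma adj_neq x y : e x y -> x != y.
Proof. by apply: contraTneq => ->; rewrite e_irr. Qed.

Lemma idx_eq (l : 'I_7) k : val l == k %% 7 -> l = idx k.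
Proof. by move/eqP => l_k; apply: val_inj; rewrite /= inordK ?ltn_pmod. Qed.

Lemma Xset_row x : x \in X -> x \notin Cset v /\ nonzero_row (rowof x).
Proof.
rewrite inE => /andP [x_C /existsP [i x_i]]; split => //.
by apply/hasP; exists (val i); rewrite ?mem_iota ?ltn_ord // bit_rowof vv_ord.
Qed.

Lemma Yset_row u : u \in Y -> u \notin Cset v /\ rowof u = zeros.
Proof.
rewrite !inE negb_or => /andP [u_C u_X]; split => //.
apply: rowof_eq => // i; rewrite nth_nseq ltn_ord.
by apply/negbTE; apply: contra u_X => u_i; rewrite u_C; apply/existsP; exists i.
Qed.

Lemma NC_eq_set1 x (l : 'I_7) : (NC e v x == [set l]) = (rowof x == unit_row l).
Proof.
apply/eqP/eqP => [NC_x|x_l].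
  apply: rowof_eq; rewrite ?size_map ?size_iota // => i.
  have /setP /(_ i) := NC_x; rewrite !inE => ->.
  by rewrite (nth_map 0) ?size_iota // nth_iota.
apply/setP => i; rewrite !inE -vv_ord -bit_rowof x_l /bit modn_small //.
by rewrite (nth_map 0) ?size_iota // nth_iota.
Qed.

Lemma Zset_row (l : 'I_7) u : u \in Z l -> u \notin Cset v /\ rowof u = unit_row l.
Proof. by rewrite inE NC_eq_set1 => /andP [/Xset_row [] ? _ /eqP]. Qed.

Lemma YZ_row u : u \in Y :|: Zall e v -> u \notin Cset v /\ rowof u \in YZ_rows.
Proof.
case/setUP => [/Yset_row [? ->]|/bigcupP [l _ /Zset_row [? ->]]];
  split; rewrite // /YZ_rows /unit_rows inE ?eqxx //.
by rewrite map_f ?orbT // mem_iota ltn_ord.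
Qed.

Lemma is_leafP x : x \in X -> is_leaf e v x <-> leaf_row (rowof x).
Proof.
move=> x_X; split => [[l [_ /eqP]]|/mapP [l]].
  by rewrite NC_eq_set1 => /eqP ->; rewrite /leaf_row /unit_rows map_f // mem_iota ltn_ord.
rewrite mem_iota => /andP [_ lt_l7] x_l; exists (Ordinal lt_l7); split => //.
by apply/eqP; rewrite NC_eq_set1 x_l.
Qed.

Lemma is_big_row x : x \in X -> big_row (rowof x) -> is_big e v x.
Proof.
move=> x_X /hasP [a]; rewrite mem_iota => /andP [_ lt_a] /hasP [b].
rewrite mem_iota => /andP [_ lt_b] /hasP [c]; rewrite mem_iota => /andP [_ lt_c].
rewrite !bit_rowof -!antihole_vv // !vv_inord //.
move=> /and5P [ab bc ac xa /andP [xb xc]]; split => //.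
exists (inord a), (inord b), (inord c); split; rewrite ?ab ?bc ?ac ?xa ?xb ?xc //.
- by apply: contraTneq ab => ->; rewrite e_irr.
- by apply: contraTneq bc => ->; rewrite e_irr.
- by apply: contraTneq ac => ->; rewrite e_irr.
Qed.

Lemma small_rowof x : is_small e v x -> x \notin Cset v /\ rowof x \in small_rows.
Proof.
case=> x_X not_leaf not_big; have [x_C x_nz] := Xset_row x_X; split => //.
rewrite mem_filter rowof_rows7 andbT /small_row x_nz /=.
by apply/andP; split; apply/negP; [move/(is_leafP x_X)|move/(is_big_row x_X)].
Qed.

Lemma small_notin_YZ x : is_small e v x -> x \notin Y :|: Zall e v.
Proof.
case=> x_X not_leaf _; rewrite in_setU in_setC in_setU x_X orbT /=.
apply/bigcupP => -[l _]; rewrite inE => /andP [_ x_l]; apply: not_leaf.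
by exists l; split => //; apply/eqP.
Qed.

Lemma consec_row_NC k x : k <= 7 -> consec_row k (rowof x) -> consec k (NC e v x).
Proof.
move=> le_k7 /mapP [i]; rewrite mem_iota => /andP [_ lt_i7] x_i; exists (inord i).
apply/setP => m; rewrite inE -vv_ord -bit_rowof x_i /bit modn_small //.
rewrite (nth_map 0) ?size_iota // nth_iota // add0n inordK //.
have lt_m := ltn_ord m; apply/idP/imsetP.
- move=> in_win; exists (Ordinal in_win) => //; apply: val_inj; rewrite /= inordK; lia.
- by case=> t _ ->; rewrite /= inordK; have := ltn_ord t; lia.
Qed.

Lemma five_consec_row_NC x : five_consec_row (rowof x) -> contains5consec e v x.
Proof.
move=> /hasP [i]; rewrite mem_iota => /andP [_ lt_i7] /allP x_i; exists (inord i) => t lt_t5.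
by rewrite inordK // -bit_rowof x_i // mem_iota.
Qed.

Lemma subrow_NC x1 x2 : subrow (rowof x1) (rowof x2) -> NC e v x1 \subset NC e v x2.
Proof.
move=> /allP sub; apply/subsetP => i; rewrite !inE -!vv_ord -!bit_rowof.
by apply/implyP/sub; rewrite mem_iota ltn_ord.
Qed.

Lemma unobstructed1 cs x : x \notin Cset v -> obstructed cs [:: rowof x] = false.
Proof. by move=> x_C; apply: (attachments_unobstructed cs (vs := [:: x])); rewrite //= x_C. Qed.

Lemma unobstructed2 cs x y : x \notin Cset v -> y \notin Cset v -> x != y ->
  obstructed cs [:: rowof x; e x y :: rowof y] = false.
Proof.
move=> x_C y_C xy; apply: (attachments_unobstructed cs (vs := [:: x; y])).
  by rewrite /= inE xy.
by rewrite /= x_C y_C.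
Qed.

Lemma unobstructed3 cs x y z : x \notin Cset v -> y \notin Cset v -> z \notin Cset v ->
  uniq [:: x; y; z] ->
  obstructed cs [:: rowof x; e x y :: rowof y; e x z :: e y z :: rowof z] = false.
Proof.
move=> x_C y_C z_C xyz; apply: (attachments_unobstructed cs (vs := [:: x; y; z])) => //=.
by rewrite x_C y_C z_C.
Qed.

Lemma unobstructed4 cs x y z w : x \notin Cset v -> y \notin Cset v -> z \notin Cset v ->
  w \notin Cset v -> uniq [:: x; y; z; w] ->
  obstructed cs [:: rowof x; e x y :: rowof y; e x z :: e y z :: rowof z;
                    e x w :: e y w :: e z w :: rowof w] = false.
Proof.
move=> x_C y_C z_C w_C xyzw; apply: (attachments_unobstructed cs (vs := [:: x; y; z; w])) => //=.
by rewrite x_C y_C z_C w_C.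
Qed.

Lemma consec34_row_NC x : consec34_row (rowof x) -> consec 3 (NC e v x) \/ consec 4 (NC e v x).
Proof. by case/orP => /consec_row_NC x_consec; [left|right]; apply: x_consec. Qed.

Lemma YZl_row (l : 'I_7) u : u \in Y :|: Z l ->
  u \notin Cset v /\ rowof u \in [:: zeros; unit_row l].
Proof. by case/setUP => [/Yset_row|/Zset_row] [? ->]; rewrite !inE eqxx ?orbT. Qed.

Lemma part1 x : x \in X -> forall i : 'I_7, e x (vv v i) -> e x (vv v (i + 1)) ->
  e x (vv v (i + 6)) || e x (vv v (i + 2)).
Proof.
move=> x_X i xi xi1; have [x_C _] := Xset_row x_X.
have := allP table1 _ (rowof_rows7 x); rewrite unobstructed1 // orbF => /allP /(_ i).
by rewrite mem_iota ltn_ord !bit_rowof xi xi1 => /(_ isT).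
Qed.

Lemma part2 x : x \in X -> is_small e v x \/ is_leaf e v x ->
  (exists i : 'I_7, [/\ ~~ e x (vv v (i + 6)), ~~ e x (vv v (i + 2)) &
                       e x (vv v i) != e x (vv v (i + 1))])
  \/ consec 3 (NC e v x) \/ consec 4 (NC e v x).
Proof.
move=> x_X small_or_leaf; have [x_C x_nz] := Xset_row x_X.
have x_cond : ~~ big_row (rowof x) || leaf_row (rowof x).
  case: small_or_leaf => [[_ _ not_big]|/(is_leafP x_X) ->]; last exact: orbT.
  by apply/orP; left; apply/negP => /(is_big_row x_X).
have := allP table2 _ (rowof_rows7 x); rewrite x_nz x_cond unobstructed1 // orbF.
case/orP => [/hasP [i]|/consec34_row_NC]; last by right.
rewrite mem_iota => /andP [_ lt_i7]; rewrite !bit_rowof => /and3P [x6 x2 x01].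
by left; exists (Ordinal lt_i7).
Qed.

Lemma part3 (l : 'I_7) x u : x \in X -> x \notin Z l -> u \in Y :|: Z l -> e x u ->
  [/\ ~ is_leaf e v x,
      (forall i : 'I_7, e x (vv v i) -> ~~ e x (vv v (i + 6)) ->
         ~~ e x (vv v (i + 1)) -> ~~ e x (vv v (i + 2)) ->
         u \in Z l /\ (l = idx i \/ l = idx (i + 1) \/ l = idx (i + 2))) &
      (forall w, w \in Y :|: Z l -> e u w -> ~~ e x w -> contains5consec e v x)].
Proof.
move=> x_X x_Z u_YZ xu; have [x_C x_nz] := Xset_row x_X.
have [u_C u_row] := YZl_row u_YZ.
have x_l : rowof x != unit_row l.
  by rewrite -NC_eq_set1; apply: contra x_Z => x_l; rewrite inE x_X.
have := allP table3 l; rewrite mem_iota ltn_ord => /(_ isT) /allP /(_ _ (rowof_rows7 x)).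
rewrite x_nz x_l => /allP /(_ _ u_row) /andP [].
have := unobstructed2 witnesses3 x_C u_C (adj_neq xu); rewrite xu => ->.
rewrite orbF => /andP [not_leaf x_pat] x_five; split.
- by move/(is_leafP x_X); apply/negP.
- move=> i xi x6 x1 x2; have := allP x_pat i; rewrite mem_iota ltn_ord !bit_rowof.
  rewrite xi x6 x1 x2 => /(_ isT) /andP [u_nz l_i]; split.
    by case/setUP: u_YZ => // /Yset_row [_ u0]; rewrite u0 eqxx in u_nz.
  by case/or3P: l_i => /idx_eq ->; [left|right; left|right; right].
- move=> w w_YZ uw xw; have [w_C w_row] := YZl_row w_YZ.
  have x_w : x != w.
    apply: contraTneq w_YZ => <-.
    by rewrite in_setU negb_or x_Z andbT in_setC in_setU x_X orbT.
  have xuw : uniq [:: x; u; w] by rewrite /= !inE negb_or (adj_neq xu) x_w (adj_neq uw).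
  apply: five_consec_row_NC; have := allP x_five _ w_row.
  have := unobstructed3 witnesses3 x_C u_C w_C xuw; rewrite xu uw (negbTE xw) => ->.
  by rewrite orbF.
Qed.

Lemma admissible_rowof x u : is_small e v x -> u \in Y :|: Zall e v -> e x u ->
  rowof u \in admissible (rowof x).
Proof.
move=> x_small u_YZ xu; have [x_C x_rows] := small_rowof x_small.
have [u_C u_rows] := YZ_row u_YZ; rewrite mem_filter u_rows andbT.
have /allP /(_ _ u_rows) := allP table4a _ x_rows.
have := unobstructed2 witnesses4a x_C u_C (adj_neq xu); rewrite xu => ->.
by rewrite orbF.
Qed.

Lemma part4 x : is_small e v x -> (exists u, u \in Y :|: Zall e v /\ e x u) ->
  (consec 3 (NC e v x) \/ consec 4 (NC e v x)) /\
  (forall j : 'I_7, ~~ e x (v j) ->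
     ((exists z, z \in Z j /\ e x z) ->
        [/\ e x (vv v (j + 2)), e x (vv v (j + 3)), e x (vv v (j + 4)) & e x (vv v (j + 5))]) /\
     (Z j != set0 -> [/\ ~~ e x (vv v (j + 6)), ~~ e x (v j) & ~~ e x (vv v (j + 1))])).
Proof.
move=> x_small [u [u_YZ xu]]; have [x_C x_rows] := small_rowof x_small.
have u_adm := admissible_rowof x_small u_YZ xu.
have /andP [x_consec _] : claim4 (rowof x) (rowof u).
  by move: u_adm; rewrite mem_filter => /andP [].
split; first exact: consec34_row_NC.
move=> j xj; have x_j : ~~ bit (rowof x) j by rewrite bit_rowof vv_ord.
have Zj_YZ z : z \in Z j -> z \in Y :|: Zall e v.
  by move=> z_Z; apply/setUP; right; apply/bigcupP; exists j.
have Zj_nbr z : z \in Z j -> e x z ->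
    [&& e x (vv v (j + 2)), e x (vv v (j + 3)), e x (vv v (j + 4)), e x (vv v (j + 5)),
        ~~ e x (vv v (j + 6)) & ~~ e x (vv v (j + 1))].
  move=> z_Z xz; have [_ z_row] := Zset_row z_Z.
  have := admissible_rowof x_small (Zj_YZ _ z_Z) xz.
  rewrite mem_filter z_row => /andP [/andP [_ x_win] _].
  have := allP x_win j; rewrite mem_iota ltn_ord x_j eqxx !bit_rowof.
  by move=> /(_ isT) /implyP /(_ isT).
split; first by case=> z [z_Z /(Zj_nbr _ z_Z) /and5P [-> -> -> -> _]].
case/set0Pn => z z_Z; case xz: (e x z).
  by have /and5P [_ _ _ _ /andP [-> ->]] := Zj_nbr _ z_Z xz.
have := allP table4b j; rewrite mem_iota ltn_ord => /(_ isT) /allP /(_ _ x_rows).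
rewrite x_j implyTb => /orP [/andP [x6 x1]|]; first by rewrite -!bit_rowof x6 x1.
have [z_C z_row] := Zset_row z_Z; have u_z : u != z by apply: contraTneq xu => ->; rewrite xz.
have x_z : x != z by apply: contraTneq (Zj_YZ _ z_Z) => <-; apply: small_notin_YZ.
have xuz : uniq [:: x; u; z] by rewrite /= !inE negb_or (adj_neq xu) x_z u_z.
have [u_C _] := YZ_row u_YZ; have uz_in : e u z \in [:: true; false] by case: (e u z).
move=> /allP /(_ _ u_adm) /allP /(_ _ uz_in).
by have := unobstructed3 witnesses4b x_C u_C z_C xuz; rewrite xu xz z_row => ->.
Qed.

Lemma small_consec_rowof x u : is_small e v x -> u \in Y :|: Zall e v -> e x u ->
  rowof x \in small_consec_rows.
Proof.
move=> x_small u_YZ xu; have [_ x_rows] := small_rowof x_small.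
rewrite mem_filter x_rows andbT.
by have := admissible_rowof x_small u_YZ xu; rewrite mem_filter => /andP [/andP []].
Qed.

Lemma subrow_refl r : subrow r r.
Proof. by apply/allP => k _; apply: implybb. Qed.

Lemma no_common_outer_nbr x1 x2 u1 u2 : is_small e v x1 -> is_small e v x2 -> ~~ e x1 x2 ->
  ~~ subrow (rowof x1) (rowof x2) -> ~~ subrow (rowof x2) (rowof x1) ->
  u1 \in Y :|: Zall e v -> e x1 u1 -> u2 \in Y :|: Zall e v -> e x2 u2 -> e x2 u1 = false.
Proof.
move=> s1 s2 n12 sub12 sub21 u1_YZ xu1 u2_YZ xu2.
have [[x1_C _] [x2_C _]] := (small_rowof s1, small_rowof s2).
have [u1_C _] := YZ_row u1_YZ.
have x12 : x1 != x2 by apply: contraNneq sub12 => <-; apply: subrow_refl.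
have x2_u1 : x2 != u1 by apply: contraTneq u1_YZ => <-; apply: small_notin_YZ.
have uniq3 : uniq [:: x1; x2; u1] by rewrite /= !inE negb_or x12 (adj_neq xu1) x2_u1.
have := allP table5a _ (small_consec_rowof s1 u1_YZ xu1).
move=> /allP /(_ _ (small_consec_rowof s2 u2_YZ xu2)); rewrite sub12 sub21 implyTb.
move=> /allP /(_ _ (admissible_rowof s1 u1_YZ xu1)); apply: contraTF => x2u1.
have := unobstructed3 witnesses5 x1_C x2_C u1_C uniq3.
by rewrite (negbTE n12) xu1 x2u1 => ->.
Qed.

Lemma part5 x1 x2 : is_small e v x1 -> is_small e v x2 -> ~~ e x1 x2 ->
  (exists u, u \in Y :|: Zall e v /\ e x1 u) -> (exists u, u \in Y :|: Zall e v /\ e x2 u) ->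
  (NC e v x1 \subset NC e v x2) \/ (NC e v x2 \subset NC e v x1).
Proof.
move=> s1 s2 n12 [u1 [u1_YZ xu1]] [u2 [u2_YZ xu2]].
case: (boolP (subrow (rowof x1) (rowof x2))) => [|sub12]; first by left; apply: subrow_NC.
case: (boolP (subrow (rowof x2) (rowof x1))) => [|sub21]; first by right; apply: subrow_NC.
exfalso; have n21 : ~~ e x2 x1 by rewrite e_sym.
have x2u1 := no_common_outer_nbr s1 s2 n12 sub12 sub21 u1_YZ xu1 u2_YZ xu2.
have x1u2 := no_common_outer_nbr s2 s1 n21 sub21 sub12 u2_YZ xu2 u1_YZ xu1.
have [[x1_C _] [x2_C _]] := (small_rowof s1, small_rowof s2).
have [[u1_C _] [u2_C _]] := (YZ_row u1_YZ, YZ_row u2_YZ).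
have x12 : x1 != x2 by apply: contraNneq sub12 => <-; apply: subrow_refl.
have x1_u2 : x1 != u2 by apply: contraTneq u2_YZ => <-; apply: small_notin_YZ.
have x2_u1 : x2 != u1 by apply: contraTneq u1_YZ => <-; apply: small_notin_YZ.
have u12 : u1 != u2 by apply: contraTneq xu1 => ->; rewrite x1u2.
have uniq3 : uniq [:: x1; x2; u1] by rewrite /= !inE negb_or x12 (adj_neq xu1) x2_u1.
have uniq4 : uniq [:: x1; x2; u1; u2].
  by rewrite /= !inE !negb_or x12 (adj_neq xu1) x1_u2 x2_u1 (adj_neq xu2) u12.
have := allP table5b _ (small_consec_rowof s1 u1_YZ xu1).
move=> /allP /(_ _ (small_consec_rowof s2 u2_YZ xu2)); rewrite sub12 sub21 implyTb.
move=> /allP /(_ _ (admissible_rowof s1 u1_YZ xu1)).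
have := unobstructed3 witnesses5 x1_C x2_C u1_C uniq3; rewrite (negbTE n12) xu1 x2u1 => ->.
have b_in : e u1 u2 \in [:: true; false] by case: (e u1 u2).
move=> /allP /(_ _ (admissible_rowof s2 u2_YZ xu2)) /allP /(_ _ b_in).
have := unobstructed4 witnesses5 x1_C x2_C u1_C u2_C uniq4.
by rewrite (negbTE n12) xu1 x2u1 x1u2 xu2 => ->.
Qed.

End Antihole.

Theorem lemma1 (T : finType) (e : rel T)
  (e_sym : symmetric e) (e_irr : irreflexive e)
  (Hfree : P6C5_free e) (v : 'I_7 -> T) (Hanti : is_7antihole e v) :
  (* (1) *)
  (forall x, x \in Xset e v -> forall i : 'I_7,
     e x (vv v i) -> e x (vv v (i + 1)) ->
     e x (vv v (i + 6)) || e x (vv v (i + 2))) /\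
  (* (2) *)
  (forall x, x \in Xset e v -> is_small e v x \/ is_leaf e v x ->
     (exists i : 'I_7, [/\ ~~ e x (vv v (i + 6)), ~~ e x (vv v (i + 2)) &
                          e x (vv v i) != e x (vv v (i + 1))])
     \/ consec 3 (NC e v x) \/ consec 4 (NC e v x)) /\
  (* (3) *)
  (forall (l : 'I_7) x u, x \in Xset e v -> x \notin Zset e v l ->
     u \in Yset e v :|: Zset e v l -> e x u ->
     [/\ ~ is_leaf e v x,
         (forall i : 'I_7, e x (vv v i) -> ~~ e x (vv v (i + 6)) ->
            ~~ e x (vv v (i + 1)) -> ~~ e x (vv v (i + 2)) ->
            u \in Zset e v l /\
            (l = idx i \/ l = idx (i + 1) \/ l = idx (i + 2))) &
         (forall w, w \in Yset e v :|: Zset e v l -> e u w -> ~~ e x w ->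
            contains5consec e v x)]) /\
  (* (4) *)
  (forall x, is_small e v x -> (exists u, u \in Yset e v :|: Zall e v /\ e x u) ->
     (consec 3 (NC e v x) \/ consec 4 (NC e v x)) /\
     (forall j : 'I_7, ~~ e x (v j) ->
        ((exists z, z \in Zset e v j /\ e x z) ->
           [/\ e x (vv v (j + 2)), e x (vv v (j + 3)), e x (vv v (j + 4)) &
               e x (vv v (j + 5))]) /\
        (Zset e v j != set0 ->
           [/\ ~~ e x (vv v (j + 6)), ~~ e x (v j) & ~~ e x (vv v (j + 1))]))) /\
  (* (5) *)
  (forall x1 x2, is_small e v x1 -> is_small e v x2 -> ~~ e x1 x2 ->
     (exists u, u \in Yset e v :|: Zall e v /\ e x1 u) ->
     (exists u, u \in Yset e v :|: Zall e v /\ e x2 u) ->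
     (NC e v x1 \subset NC e v x2) \/ (NC e v x2 \subset NC e v x1)).
Proof.
split; first exact: part1.
split; first exact: part2.
split; first exact: part3.
split; first exact: part4.
exact: part5.
Qed.
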